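(* Let $\mathcal{M}$ be a rigid monoidal category and let $F,G\colon\mathcal{M}\to\mathrm{vect}$ be monoidal functors with $F(\mathbbm{1})=G(\mathbbm{1})=\Bbbk$. Suppose that (i) $F$ is non-degenerate, i.e. for every object $X\in\mathcal{M}$, $F(X)$ is spanned by the vectors $F(f)(1)$ for $f\in\mathcal{M}(\mathbbm{1},X)$; (ii) $\dim_\Bbbk F(X)\geq\dim_\Bbbk G(X)$ for all $X\in\mathcal{M}$; (iii) $F(\varphi)=G(\varphi)$ for all $\varphi\in\operatorname{End}_\mathcal{M}(\mathbbm{1})$. Then there is a unique monoidal natural isomorphism between $F$ and $G$.
   Context: $\mathrm{vect}$ denotes the category of finite-dimensional vector spaces over a field $\Bbbk$; endomorphisms of $\mathbbm{1}$ are sent by $F,G$ to scalars in $\operatorname{End}(\Bbbk)=\Bbbk$. *)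

From HB Require Import structures.
From mathcomp Require Import all_boot all_order all_algebra.
From mathcomp Require Import mxtens.
Set Implicit Arguments. Unset Strict Implicit. Unset Printing Implicit Defensive.
Import GRing.Theory.
Local Open Scope ring_scope.

(* Composition is written diagrammatically: cmp f g = "first f, then g".
   This matches MathComp's row-vector convention for matrices
   (the map of A is u |-> u *m A, so the composite of A then B is A *m B). *)
Record MonCat := {
  ob :> Type;
  mhom : ob -> ob -> Type;
  idm : forall X, mhom X X;
  cmp : forall X Y Z, mhom X Y -> mhom Y Z -> mhom X Z;
  cmp1f : forall X Y (f : mhom X Y), cmp (idm X) f = f;
  cmpf1 : forall X Y (f : mhom X Y), cmp f (idm Y) = f;
  cmpA : forall X Y Z W (f : mhom X Y) (g : mhom Y Z) (h : mhom Z W),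
      cmp f (cmp g h) = cmp (cmp f g) h;
  tens : ob -> ob -> ob;
  tensh : forall X X' Y Y', mhom X Y -> mhom X' Y' -> mhom (tens X X') (tens Y Y');
  tens_id : forall X Y, tensh (idm X) (idm Y) = idm (tens X Y);
  tens_cmp : forall X X' Y Y' Z Z' (f : mhom X Y) (g : mhom Y Z)
      (f' : mhom X' Y') (g' : mhom Y' Z'),
      tensh (cmp f g) (cmp f' g') = cmp (tensh f f') (tensh g g');
  munit : ob;
  assoc : forall X Y Z, mhom (tens (tens X Y) Z) (tens X (tens Y Z));
  assoc_inv : forall X Y Z, mhom (tens X (tens Y Z)) (tens (tens X Y) Z);
  assoc_iso1 : forall X Y Z, cmp (assoc X Y Z) (assoc_inv X Y Z) = idm _;
  assoc_iso2 : forall X Y Z, cmp (assoc_inv X Y Z) (assoc X Y Z) = idm _;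
  assoc_nat : forall X X' X'' Y Y' Y'' (f : mhom X Y) (g : mhom X' Y')
      (h : mhom X'' Y''),
      cmp (tensh (tensh f g) h) (assoc Y Y' Y'')
      = cmp (assoc X X' X'') (tensh f (tensh g h));
  lu : forall X, mhom (tens munit X) X;
  lu_inv : forall X, mhom X (tens munit X);
  lu_iso1 : forall X, cmp (lu X) (lu_inv X) = idm _;
  lu_iso2 : forall X, cmp (lu_inv X) (lu X) = idm _;
  lu_nat : forall X Y (f : mhom X Y),
      cmp (tensh (idm munit) f) (lu Y) = cmp (lu X) f;
  ru : forall X, mhom (tens X munit) X;
  ru_inv : forall X, mhom X (tens X munit);
  ru_iso1 : forall X, cmp (ru X) (ru_inv X) = idm _;
  ru_iso2 : forall X, cmp (ru_inv X) (ru X) = idm _;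
  ru_nat : forall X Y (f : mhom X Y),
      cmp (tensh f (idm munit)) (ru Y) = cmp (ru X) f;
  pentagon : forall W X Y Z,
      cmp (assoc (tens W X) Y Z) (assoc W X (tens Y Z))
      = cmp (cmp (tensh (assoc W X Y) (idm Z)) (assoc W (tens X Y) Z))
            (tensh (idm W) (assoc X Y Z));
  triangle : forall X Y,
      cmp (assoc X munit Y) (tensh (idm X) (lu Y)) = tensh (ru X) (idm Y)
}.

Arguments mhom {C} : rename.
Arguments idm {C} X : rename.
Arguments cmp {C X Y Z} : rename.
Arguments tens {C} : rename.
Arguments tensh {C X X' Y Y'} : rename.
Arguments munit {C} : rename.
Arguments assoc {C} : rename.
Arguments assoc_inv {C} : rename.
Arguments lu {C} : rename.
Arguments lu_inv {C} : rename.
Arguments ru {C} : rename.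
Arguments ru_inv {C} : rename.

(* (A, B, ev : A ⊗ B -> 1, coev : 1 -> B ⊗ A) is a duality: A is a left dual
   of B (equivalently B is a right dual of A), i.e. the two zigzag
   identities hold. *)
Definition is_duality (C : MonCat) (A B : C)
    (ev : mhom (tens A B) munit) (coev : mhom munit (tens B A)) : Prop :=
  cmp (lu_inv B) (cmp (tensh coev (idm B))
      (cmp (assoc B A B) (cmp (tensh (idm B) ev) (ru B)))) = idm B
  /\
  cmp (ru_inv A) (cmp (tensh (idm A) coev)
      (cmp (assoc_inv A B A) (cmp (tensh ev (idm A)) (lu A)))) = idm A.

Definition rigid (C : MonCat) : Prop :=
  forall X : C,
    (exists (Xd : C) (ev : mhom (tens Xd X) munit) (coev : mhom munit (tens X Xd)),
        is_duality ev coev)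
    /\
    (exists (Xd : C) (ev : mhom (tens X Xd) munit) (coev : mhom munit (tens Xd X)),
        is_duality ev coev).

(* The monoidal structure of vect (skeletal model: an object is a dimension
   n, i.e. K^n, a morphism m -> n is an m x n matrix acting on row vectors,
   the tensor product is the Kronecker product 'tensmx', where the basis
   vector e_i ⊗ e_j of K^m ⊗ K^n is e_(i*n+j)).  The associator and unitors
   of vect are then the identity permutations on indices. *)
Definition vassoc (K : fieldType) (a b c : nat) : 'M[K]_(a * b * c, a * (b * c)) :=
  \matrix_(i, j) ((i : nat) == j)%:R.
Definition vlu (K : fieldType) (n : nat) : 'M[K]_(1 * n, n) :=
  \matrix_(i, j) ((i : nat) == j)%:R.
Definition vru (K : fieldType) (n : nat) : 'M[K]_(n * 1, n) :=
  \matrix_(i, j) ((i : nat) == j)%:R.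

Record MonFun (C : MonCat) (K : fieldType) := {
  fob :> C -> nat;
  fhom : forall X Y : C, mhom X Y -> 'M[K]_(fob X, fob Y);
  fhom_id : forall X : C, fhom (idm X) = 1%:M;
  fhom_cmp : forall (X Y Z : C) (f : mhom X Y) (g : mhom Y Z),
      fhom (cmp f g) = fhom f *m fhom g;
  fJ : forall X Y : C, 'M[K]_(fob X * fob Y, fob (tens X Y));
  fJ_inv : forall X Y : C, 'M[K]_(fob (tens X Y), fob X * fob Y);
  fJ_iso1 : forall X Y : C, fJ X Y *m fJ_inv X Y = 1%:M;
  fJ_iso2 : forall X Y : C, fJ_inv X Y *m fJ X Y = 1%:M;
  fJ_nat : forall (X X' Y Y' : C) (f : mhom X Y) (g : mhom X' Y'),
      tensmx (fhom f) (fhom g) *m fJ Y Y' = fJ X X' *m fhom (tensh f g);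
  (* phi0 : k -> F 1, invertible; phi0 is the image of 1 in F(1) *)
  fphi0 : 'M[K]_(1, fob munit);
  fphi0_inv : 'M[K]_(fob munit, 1);
  fphi0_iso1 : fphi0 *m fphi0_inv = 1%:M;
  fphi0_iso2 : fphi0_inv *m fphi0 = 1%:M;
  f_assoc : forall X Y Z : C,
      tensmx (fJ X Y) (1%:M : 'M_(fob Z)) *m fJ (tens X Y) Z *m fhom (assoc X Y Z)
      = vassoc K (fob X) (fob Y) (fob Z)
          *m tensmx (1%:M : 'M_(fob X)) (fJ Y Z) *m fJ X (tens Y Z);
  f_lu : forall X : C,
      tensmx fphi0 (1%:M : 'M_(fob X)) *m fJ munit X *m fhom (lu X) = vlu K (fob X);
  f_ru : forall X : C,
      tensmx (1%:M : 'M_(fob X)) fphi0 *m fJ X munit *m fhom (ru X) = vru K (fob X)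
}.

Arguments fhom {C K} F {X Y} : rename.
Arguments fJ {C K} F : rename.
Arguments fphi0 {C K} F : rename.
Arguments fphi0_inv {C K} F : rename.

Definition fun_nondegenerate (C : MonCat) (K : fieldType) (F : MonFun C K) : Prop :=
  forall (X : C) (v : 'rV[K]_(F X)),
    exists s : seq (K * mhom munit X),
      v = \sum_(p <- s) p.1 *: (fphi0 F *m fhom F p.2).

(* The scalar F(phi) in End(F 1) = End(k) = k, for phi : 1 -> 1
   (read through the identification phi0 : k ~ F 1). *)
Definition unit_scalar (C : MonCat) (K : fieldType) (F : MonFun C K)
    (phi : mhom (@munit C) munit) : 'M[K]_1 :=
  fphi0 F *m fhom F phi *m fphi0_inv F.

Definition monoidal_nat_iso (C : MonCat) (K : fieldType) (F G : MonFun C K)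
    (eta : forall X : C, 'M[K]_(F X, G X)) : Prop :=
  (forall (X Y : C) (f : mhom X Y), fhom F f *m eta Y = eta X *m fhom G f)
  /\ (forall X : C, exists eta' : 'M[K]_(G X, F X),
          eta X *m eta' = 1%:M /\ eta' *m eta X = 1%:M)
  /\ (forall X Y : C, fJ F X Y *m eta (tens X Y) = tensmx (eta X) (eta Y) *m fJ G X Y)
  /\ fphi0 F *m eta munit = fphi0 G.

(* For f : 1 -> X and g : X -> 1, hypothesis (iii) applied to f ; g says
   that the pairing of the vector F(f)(1) with the functional F(g) equals that of
   G(f)(1) with G(g).  By non-degeneracy the vectors F(f)(1) span F X, and the
   zigzag identity of a right dual of X shows that the functionals F(g) span the
   dual of F X.  Hence the pairing matrix has rank dim F X >= dim G X, which forces
   equality of dimensions and makes F(f)(1) |-> G(f)(1) a well-defined linear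
   isomorphism eta_X.  Naturality and monoidality are checked on the spanning
   vectors F(f)(1) (resp. their tensor products), and uniqueness holds because a
   natural eta compatible with phi0 must send F(f)(1) to G(f)(1). *)

From HB Require Import structures.
From mathcomp Require Import all_boot all_order all_algebra.
From mathcomp Require Import mxtens.
From Stdlib Require Import ClassicalEpsilon.
Set Implicit Arguments. Unset Strict Implicit. Unset Printing Implicit Defensive.
Import GRing.Theory.
Local Open Scope ring_scope.

Lemma dependent_functional_choice (A : Type) (B : A -> Type) (P : forall a, B a -> Prop) :
  (forall a, exists b, P a b) -> exists f : forall a, B a, forall a, P a (f a).
Proof.
move=> exP; exists (fun a => proj1_sig (constructive_indefinite_description _ (exP a))).
by move=> a; exact: proj2_sig.
Qed.

Section IdmxCast.
Variable R : pzRingType.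

(* The structure maps [vassoc], [vlu] and [vru] of vect are instances of [idmx_cast]. *)
Definition idmx_cast p q : 'M[R]_(p, q) := \matrix_(i, j) ((i : nat) == j)%:R.

Lemma mulmx_idmx_cast m p q (e : p = q) (A : 'M[R]_(m, p)) :
  A *m idmx_cast p q = castmx (erefl, e) A.
Proof.
apply/matrixP => i k; rewrite castmxE cast_ord_id mxE (bigD1 (cast_ord (esym e) k)) //=.
rewrite mxE eqxx mulr1 big1 ?addr0 // => j; rewrite mxE -val_eqE /=.
by move/negbTE => ->; rewrite mulr0.
Qed.

Lemma idmx_cast_mul m p q (e : p = q) (A : 'M[R]_(q, m)) :
  idmx_cast p q *m A = castmx (esym e, erefl) A.
Proof.
apply/matrixP => i k; rewrite castmxE cast_ord_id esymK mxE (bigD1 (cast_ord e i)) //=.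
rewrite mxE eqxx mul1r big1 ?addr0 // => j; rewrite mxE -val_eqE /= eq_sym.
by move/negbTE => ->; rewrite mul0r.
Qed.

Lemma idmx_castK p q (e : p = q) : idmx_cast q p *m idmx_cast p q = 1%:M.
Proof. by apply/matrixP => i j; rewrite (mulmx_idmx_cast e) castmxE !mxE. Qed.

End IdmxCast.

Section Kronecker.
Variable R : comPzRingType.

Lemma sum_mxtens_index (V : nmodType) p q (f : 'I_(p * q) -> V) :
  \sum_k f k = \sum_(x < p) \sum_(y < q) f (mxtens_index (x, y)).
Proof.
rewrite pair_bigA /= (reindex (@mxtens_index p q)) /=; first by apply: eq_bigr => -[].
by exists (@mxtens_unindex p q) => k _; [exact: mxtens_indexK | exact: mxtens_unindexK].
Qed.

Lemma sum_delta_mull n (i : 'I_n) (f : 'I_n -> R) : \sum_x (i == x)%:R * f x = f i.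
Proof.
rewrite (bigD1 i) //= eqxx mul1r big1 ?addr0 // => x x_neq_i.
by rewrite eq_sym (negbTE x_neq_i) mul0r.
Qed.

Lemma sum_delta_mulr n (i : 'I_n) (f : 'I_n -> R) : \sum_x f x * (x == i)%:R = f i.
Proof.
rewrite (bigD1 i) //= eqxx mulr1 big1 ?addr0 // => x x_neq_i.
by rewrite (negbTE x_neq_i) mulr0.
Qed.

Lemma tensmx1 a b : tensmx (1%:M : 'M[R]_a) (1%:M : 'M[R]_b) = 1%:M.
Proof.
apply/matrixP => i j.
case: (mxtens_indexP i) => i1 i2; case: (mxtens_indexP j) => j1 j2.
rewrite tensmxE !mxE (inj_eq (can_inj (@mxtens_indexK a b))) xpair_eqE.
by case: (i1 == j1); case: (i2 == j2); rewrite ?mulr1 ?mulr0.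
Qed.

Lemma tens1mxM m n p q (A : 'M[R]_(n, p)) (B : 'M[R]_(p, q)) :
  tensmx (1%:M : 'M_m) (A *m B) = tensmx 1%:M A *m tensmx 1%:M B.
Proof. by rewrite tensmx_mul mulmx1. Qed.

Lemma tensmxM1 m n p q (A : 'M[R]_(n, p)) (B : 'M[R]_(p, q)) :
  tensmx (A *m B) (1%:M : 'M_m) = tensmx A 1%:M *m tensmx B 1%:M.
Proof. by rewrite tensmx_mul mulmx1. Qed.

Lemma tensmx_sumr m n p q I (s : seq I) (A : 'M[R]_(m, n)) (B : I -> 'M[R]_(p, q)) :
  tensmx A (\sum_(i <- s) B i) = \sum_(i <- s) tensmx A (B i).
Proof.
apply/matrixP => i j; rewrite !mxE summxE mulr_sumr summxE.
by apply: eq_bigr => k _; rewrite mxE.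
Qed.

Lemma tensmxZr m n p q (A : 'M[R]_(m, n)) (c : R) (B : 'M[R]_(p, q)) :
  tensmx A (c *: B) = c *: tensmx A B.
Proof. by apply/matrixP => i j; rewrite !mxE mulrCA. Qed.

Lemma row_tensmx m n p q (A : 'M[R]_(m, n)) (B : 'M[R]_(p, q)) i k :
  row (mxtens_index (i, k)) (tensmx A B) = tensmx (row i A) (row k B).
Proof.
apply/matrixP => r j; case: (mxtens_indexP j) => j1 j2.
have -> : r = mxtens_index (ord0, ord0) :> 'I_(1 * 1) by apply/val_inj; case: r => -[].
by rewrite mxE tensmxE [RHS]mxE !mxtens_indexK /= !mxE.
Qed.

Lemma tens1mx_idmx_cast n (u : 'rV[R]_n) :
  tensmx (1%:M : 'M_1) u *m idmx_cast R (1 * n) n = u.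
Proof.
by rewrite (mulmx_idmx_cast (mul1n n)) tens_scalar1mx castmx_comp castmx_id.
Qed.

Lemma idmx_cast_tens1mxE n p (w : 'rV[R]_p) i x y :
  (idmx_cast R n (n * 1) *m tensmx 1%:M w) i (mxtens_index (x, y))
  = (i == x)%:R * w 0 y.
Proof.
rewrite (idmx_cast_mul (esym (muln1 n))) castmxE cast_ord_id !esymK.
have -> : cast_ord (esym (muln1 n)) i = mxtens_index (i, ord0).
  by apply: val_inj; rewrite /= muln1 addn0.
by rewrite tensmxE mxE.
Qed.

Lemma idmx_cast_tens_delta n d (E : 'M[R]_(n * d, 1)) (a : 'I_d) i :
  (idmx_cast R n (n * 1) *m tensmx 1%:M (delta_mx 0 a) *m E) i 0
  = E (mxtens_index (i, a)) 0.
Proof.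
rewrite mxE sum_mxtens_index.
under eq_bigr do under eq_bigr do rewrite idmx_cast_tens1mxE mxE -mulrA.
under eq_bigr do rewrite -mulr_sumr.
rewrite sum_delta_mull (bigD1 a) //= eqxx mul1r big1 ?addr0 // => b b_neq_a.
by rewrite (negbTE b_neq_a) mul0r.
Qed.

Lemma snake_idmx_cast n d (c : 'rV[R]_(d * n)) (E : 'M[R]_(n * d, 1)) :
  idmx_cast R n (n * 1) *m tensmx 1%:M c *m idmx_cast R (n * (d * n)) (n * d * n)
    *m tensmx E 1%:M *m idmx_cast R (1 * n) n
  = \sum_(a < d) (idmx_cast R n (n * 1) *m tensmx 1%:M (delta_mx 0 a) *m E)
                  *m \row_j c 0 (mxtens_index (a, j)).
Proof.
apply/matrixP => i j.
have cast_assoc x a z : cast_ord (esym (mulnA n d n)) (mxtens_index (mxtens_index (x, a), z))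
                        = mxtens_index (x, mxtens_index (a, z)).
  by apply: val_inj; rewrite /= mulnDl -mulnA addnA.
have cast_unit : cast_ord (esym (mul1n n)) j = mxtens_index (ord0, j).
  by apply: val_inj; rewrite /= mul0n add0n.
rewrite (mulmx_idmx_cast (mul1n n)) (mulmx_idmx_cast (mulnA n d n)) castmxE cast_ord_id.
rewrite [LHS]mxE 2!sum_mxtens_index [RHS]summxE.
under eq_bigr do under eq_bigr do under eq_bigr do
  rewrite castmxE cast_ord_id cast_assoc idmx_cast_tens1mxE cast_unit tensmxE mxE -mulrA.
under eq_bigr do under eq_bigr do rewrite -mulr_sumr.
under eq_bigr do rewrite -mulr_sumr; rewrite sum_delta_mull.
apply: eq_bigr => a _; rewrite mxE big_ord1 idmx_cast_tens_delta mxE mulrC.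
by under eq_bigr do rewrite mulrA; rewrite sum_delta_mulr.
Qed.

End Kronecker.

Section FiniteSpan.
Variables (K : fieldType) (H : Type) (n : nat) (r : H -> 'rV[K]_n).

Definition family_mx N (f : 'I_N -> H) : 'M[K]_(N, n) := \matrix_(k, j) r (f k) 0 j.

Lemma row_family_mx N (f : 'I_N -> H) k : row k (family_mx f) = r (f k).
Proof. by apply/rowP => j; rewrite !mxE. Qed.

(* The family [r] may be infinite: a span is witnessed by a finite subfamily. *)
Definition spanned p (A : 'M[K]_(p, n)) := exists N (f : 'I_N -> H), (A <= family_mx f)%MS.

Lemma spanned0 p : spanned (0 : 'M_(p, n)).
Proof. by exists 0%N, (fun k : 'I_0 => False_rect H (notF (ltn_ord k))); rewrite sub0mx. Qed.

Lemma spanned_single h : spanned (r h).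
Proof.
by exists 1%N, (fun=> h); rewrite -(@row_family_mx 1 (fun=> h) ord0) row_sub.
Qed.

Lemma spanned_add p (A B : 'M[K]_(p, n)) : spanned A -> spanned B -> spanned (A + B).
Proof.
move=> [N1 [f1 sA]] [N2 [f2 sB]].
pose f k := match split k with inl k1 => f1 k1 | inr k2 => f2 k2 end.
exists (N1 + N2)%N, f.
have -> : family_mx f = col_mx (family_mx f1) (family_mx f2).
  by apply/matrixP => k j; rewrite !mxE /f; case: split => ?; rewrite mxE.
by rewrite -addsmxE addmx_sub_adds.
Qed.

Lemma spanned_mull p q (B : 'M[K]_(q, p)) A : spanned A -> spanned (B *m A).
Proof. by move=> [N [f sA]]; exists N, f; exact: submx_trans (submxMl B A) sA. Qed.

Lemma spanned_scale p (A : 'M[K]_(p, n)) c : spanned A -> spanned (c *: A).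
Proof. by move=> [N [f sA]]; exists N, f; exact: scalemx_sub. Qed.

Lemma spanned_sum p I (s : seq I) (A : I -> 'M[K]_(p, n)) :
  (forall i, spanned (A i)) -> spanned (\sum_(i <- s) A i).
Proof.
move=> sA; elim: s => [|i s IHs]; first by rewrite big_nil; exact: spanned0.
by rewrite big_cons; apply: spanned_add.
Qed.

Lemma spanned_rows p (A : 'M[K]_(p, n)) : (forall i, spanned (row i A)) -> spanned A.
Proof.
move=> sA; rewrite -[A]mul1mx mx1_sum_delta mulmx_suml; apply: spanned_sum => i.
by rewrite -(mul_delta_mx (0 : 'I_1)) -mulmxA -rowE; apply: spanned_mull.
Qed.

End FiniteSpan.

Section PairingTransport.
Variable K : fieldType.

Lemma mulmx_transport N L n m (A : 'M[K]_(N, n)) (B : 'M_(n, L)) (A' : 'M_(N, m))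
    (B' : 'M_(m, L)) (Q : 'M_(n, N)) p (u : 'M_(p, n)) (u' : 'M_(p, m)) :
  A *m B = A' *m B' -> row_free B' -> Q *m A = 1%:M ->
  u *m B = u' *m B' -> u *m (Q *m A') = u'.
Proof.
move=> eqAB freeB' QA eq_u; apply: (row_free_inj freeB').
by rewrite /= -!mulmxA -eqAB !mulmxA -(mulmxA u) QA mulmx1.
Qed.

Lemma pairing_transport N L n m (A : 'M[K]_(N, n)) (B : 'M_(n, L)) (A' : 'M_(N, m))
    (B' : 'M_(m, L)) :
  (m <= n)%N -> row_full A -> row_free B -> A *m B = A' *m B' ->
  exists e : 'M_(n, m),
    (forall p (u : 'M_(p, n)) (u' : 'M_(p, m)), u *m B = u' *m B' -> u *m e = u')
    /\ exists e' : 'M_(m, n), e *m e' = 1%:M /\ e' *m e = 1%:M.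
Proof.
move=> le_mn fullA freeB eqAB.
have rankAB' : \rank (A' *m B') = n by rewrite -eqAB mxrankMfree //; exact/eqP.
have fullA' : row_full A'.
  rewrite /row_full eqn_leq rank_leq_col (leq_trans le_mn) //.
  by rewrite -{1}rankAB' mxrankM_maxl.
have freeB' : row_free B'.
  rewrite /row_free eqn_leq rank_leq_row (leq_trans le_mn) //.
  by rewrite -{1}rankAB' mxrankM_maxr.
have [Q QA] := row_fullP fullA; have [Q' QA'] := row_fullP fullA'.
have Ae : A *m (Q *m A') = A' by exact: (mulmx_transport eqAB).
have A'e' : A' *m (Q' *m A) = A by exact: (mulmx_transport (esym eqAB)).
exists (Q *m A'); split; first by move=> p u u'; exact: (mulmx_transport eqAB).
by exists (Q' *m A); rewrite -!mulmxA A'e' Ae QA QA'.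
Qed.

End PairingTransport.

Section MonoidalFunctor.
Variables (K : fieldType) (C : MonCat) (F : MonFun C K).

Lemma fhom_inv (X Y : C) (f : mhom X Y) (g : mhom Y X) :
  cmp f g = idm X -> fhom F f *m fhom F g = 1%:M.
Proof. by move=> fgK; rewrite -fhom_cmp fgK fhom_id. Qed.

Lemma fJ_natl (X Y Z : C) (f : mhom X Y) :
  fJ F X Z *m fhom F (tensh f (idm Z)) = tensmx (fhom F f) 1%:M *m fJ F Y Z.
Proof. by rewrite -fJ_nat fhom_id. Qed.

Lemma fJ_natr (X Y Z : C) (f : mhom X Y) :
  fJ F Z X *m fhom F (tensh (idm Z) f) = tensmx 1%:M (fhom F f) *m fJ F Z Y.
Proof. by rewrite -fJ_nat fhom_id. Qed.

Lemma fhom_ru_inv (X : C) :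
  fhom F (ru_inv X)
  = idmx_cast K (F X) (F X * 1) *m tensmx 1%:M (fphi0 F) *m fJ F X munit.
Proof.
rewrite -[RHS]mulmx1 -(fhom_inv (ru_iso1 X)) !mulmxA.
by rewrite -2!(mulmxA (idmx_cast _ _ _)) f_ru (idmx_castK _ (muln1 _)) mul1mx.
Qed.

Lemma fJ_lu (X : C) :
  fJ F munit X *m fhom F (lu X) = tensmx (fphi0_inv F) 1%:M *m vlu K (F X).
Proof.
by rewrite -(f_lu F X) !mulmxA tensmx_mul fphi0_iso2 mulmx1 tensmx1 mul1mx.
Qed.

Lemma fJ_assoc_inv (X Y Z : C) :
  tensmx 1%:M (fJ F Y Z) *m fJ F X (tens Y Z) *m fhom F (assoc_inv X Y Z)
  = idmx_cast K (F X * (F Y * F Z)) (F X * F Y * F Z)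
      *m tensmx (fJ F X Y) 1%:M *m fJ F (tens X Y) Z.
Proof.
rewrite -[RHS]mulmx1 -(fhom_inv (assoc_iso1 X Y Z)) !mulmxA.
rewrite -2!(mulmxA (idmx_cast _ _ _)) f_assoc !mulmxA.
by rewrite (idmx_castK _ (esym (mulnA _ _ _))) mul1mx.
Qed.

Definition fvec (X : C) (f : mhom munit X) : 'rV[K]_(F X) := fphi0 F *m fhom F f.

(* The functional F(g) on [F X], transposed into a row vector. *)
Definition fcovec (X : C) (g : mhom X munit) : 'rV[K]_(F X) := (fhom F g *m fphi0_inv F)^T.

Lemma fvec_cmp (X Y : C) (f : mhom munit X) (h : mhom X Y) :
  fvec (cmp f h) = fvec f *m fhom F h.
Proof. by rewrite /fvec fhom_cmp mulmxA. Qed.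

Lemma fvec_fcovec (X : C) (f : mhom munit X) (g : mhom X munit) :
  fvec f *m (fcovec g)^T = unit_scalar F (cmp f g).
Proof. by rewrite /fvec /fcovec trmxK /unit_scalar fhom_cmp !mulmxA. Qed.

Lemma fphi0_tens :
  tensmx (fphi0 F) (fphi0 F) *m fJ F munit munit = fphi0 F *m fhom F (lu_inv munit).
Proof.
have := congr1 (mulmx (tensmx (1%:M : 'M_1) (fphi0 F))) (f_lu F munit).
rewrite tens1mx_idmx_cast !mulmxA tensmx_mul mul1mx mulmx1 => lu_phi0.
by rewrite -[in RHS]lu_phi0 -[RHS]mulmxA (fhom_inv (lu_iso1 _)) mulmx1.
Qed.

Lemma fvec_tens (X Y : C) (f : mhom munit X) (f' : mhom munit Y) :
  tensmx (fvec f) (fvec f') *m fJ F X Y = fvec (cmp (lu_inv munit) (tensh f f')).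
Proof. by rewrite /fvec -tensmx_mul -mulmxA fJ_nat mulmxA fphi0_tens fhom_cmp mulmxA. Qed.

Lemma tens1mx_fvec (X Y : C) (h : mhom munit Y) :
  idmx_cast K (F X) (F X * 1) *m tensmx 1%:M (fvec h) *m fJ F X Y
  = fhom F (cmp (ru_inv X) (tensh (idm X) h)).
Proof.
by rewrite fhom_cmp fhom_ru_inv /fvec tens1mxM -!mulmxA -fJ_natr.
Qed.

Lemma fhom_snake (X Y : C) (ev : mhom (tens X Y) munit) (coev : mhom munit (tens Y X)) :
  fhom F (cmp (ru_inv X) (cmp (tensh (idm X) coev)
           (cmp (assoc_inv X Y X) (cmp (tensh ev (idm X)) (lu X)))))
  = idmx_cast K (F X) (F X * 1) *m tensmx 1%:M (fphi0 F *m fhom F coev *m fJ_inv F Y X)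
      *m idmx_cast K (F X * (F Y * F X)) (F X * F Y * F X)
      *m tensmx (fJ F X Y *m fhom F ev *m fphi0_inv F) 1%:M *m vlu K (F X).
Proof.
set c := fphi0 F *m fhom F coev *m fJ_inv F Y X.
have coev_step : fhom F (ru_inv X) *m fhom F (tensh (idm X) coev)
    = idmx_cast K (F X) (F X * 1) *m tensmx 1%:M c *m tensmx 1%:M (fJ F Y X)
        *m fJ F X (tens Y X).
  rewrite fhom_ru_inv -(mulmxA _ (fJ F X munit)) fJ_natr mulmxA.
  rewrite -(mulmxA _ (tensmx 1%:M (fphi0 F))).
  have -> : fhom F coev = fhom F coev *m fJ_inv F Y X *m fJ F Y X.
    by rewrite -mulmxA fJ_iso2 mulmx1.
  by rewrite -tens1mxM !mulmxA tens1mxM mulmxA.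
have ev_step : tensmx (fJ F X Y) 1%:M *m fJ F (tens X Y) X *m fhom F (tensh ev (idm X))
    *m fhom F (lu X) = tensmx (fJ F X Y *m fhom F ev *m fphi0_inv F) 1%:M *m vlu K (F X).
  rewrite -(mulmxA _ (fJ F (tens X Y) X)) fJ_natl !mulmxA.
  by rewrite -(mulmxA _ (fJ F munit X)) fJ_lu !mulmxA -!tensmxM1.
rewrite !fhom_cmp !mulmxA coev_step.
rewrite -2![in LHS](mulmxA (_ *m tensmx 1%:M c)) fJ_assoc_inv !mulmxA.
by rewrite -3![in LHS](mulmxA (_ *m idmx_cast K _ _)) ev_step !mulmxA.
Qed.

End MonoidalFunctor.

Section NondegenerateFunctor.
Variables (K : fieldType) (C : MonCat) (F : MonFun C K).
Hypothesis F_nondeg : fun_nondegenerate F.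

Lemma fvec_spanned (X : C) : spanned (@fvec K C F X) 1%:M.
Proof.
apply: spanned_rows => i; have [s ->] := F_nondeg (row i 1%:M).
by apply: spanned_sum => p; apply/spanned_scale/spanned_single.
Qed.

Lemma fvec_ext (X : C) p (M1 M2 : 'M[K]_(F X, p)) :
  (forall f, fvec F f *m M1 = fvec F f *m M2) -> M1 = M2.
Proof.
move=> eqM; have [N [fs /submxP [P oneP]]] := fvec_spanned X.
rewrite -(mul1mx M1) -(mul1mx M2) oneP -!mulmxA; congr (_ *m _).
by apply/row_matrixP => k; rewrite !row_mul row_family_mx.
Qed.

Lemma tens_fvec_ext (X Y : C) p (M1 M2 : 'M[K]_(F X * F Y, p)) :
  (forall f f', tensmx (fvec F f) (fvec F f') *m M1 = tensmx (fvec F f) (fvec F f') *m M2) ->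
  M1 = M2.
Proof.
move=> eqM; have [N [fs /submxP [P oneP]]] := fvec_spanned X.
have [N' [fs' /submxP [P' oneP']]] := fvec_spanned Y.
rewrite -(mul1mx M1) -(mul1mx M2) -tensmx1 oneP oneP' -tensmx_mul -!mulmxA.
congr (_ *m _); apply/row_matrixP => k; case: (mxtens_indexP k) => k1 k2.
by rewrite !row_mul row_tensmx !row_family_mx.
Qed.

Lemma ev_fcovec_spanned (X Y : C) (ev : mhom (tens X Y) munit) (w : 'rV[K]_(F Y)) :
  spanned (@fcovec K C F X) (idmx_cast K (F X) (F X * 1) *m tensmx 1%:M w
                              *m fJ F X Y *m fhom F ev *m fphi0_inv F)^T.
Proof.
have [s ->] := F_nondeg w.
rewrite tensmx_sumr mulmx_sumr !mulmx_suml raddf_sum /=; apply: spanned_sum => p.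
rewrite tensmxZr -scalemxAr -!scalemxAl linearZ /=; apply: spanned_scale.
by rewrite tens1mx_fvec -fhom_cmp; apply: spanned_single.
Qed.

(* The zigzag identity writes the identity of [F X] as a finite sum of rank-one maps
   whose functional parts are of the form v |-> F(ev)(v (x) w). *)
Lemma fcovec_spanned (C_rigid : rigid C) (X : C) : spanned (@fcovec K C F X) 1%:M.
Proof.
have [_ [Y [ev [coev [_ zigzag]]]]] := C_rigid X.
have := fhom_snake F ev coev; rewrite zigzag fhom_id snake_idmx_cast => one_eq.
rewrite -trmx1 one_eq raddf_sum /=; apply: spanned_sum => a.
rewrite trmx_mul; apply: spanned_mull; rewrite !mulmxA.
exact: ev_fcovec_spanned.
Qed.

End NondegenerateFunctor.

Lemma exists_fvec_iso (K : fieldType) (C : MonCat) (F G : MonFun C K) (X : C) :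
  rigid C -> fun_nondegenerate F -> (G X <= F X)%N ->
  (forall phi, unit_scalar F phi = unit_scalar G phi) ->
  exists e : 'M[K]_(F X, G X), (forall f, fvec F f *m e = fvec G f)
    /\ exists e' : 'M_(G X, F X), e *m e' = 1%:M /\ e' *m e = 1%:M.
Proof.
move=> C_rigid F_nondeg le_GF eq_scalar.
have [N [fs spanF]] := fvec_spanned F_nondeg X.
have [L [gs spanF']] := fcovec_spanned F_nondeg C_rigid X.
pose A (H : MonFun C K) := family_mx (@fvec K C H X) fs.
pose B (H : MonFun C K) := (family_mx (@fcovec K C H X) gs)^T.
have pairing_row (H : MonFun C K) f :
    fvec H f *m B H = \row_l unit_scalar H (cmp f (gs l)) 0 0.
  apply/rowP => l; rewrite [RHS]mxE -fvec_fcovec !mxE.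
  by apply: eq_bigr => k _; rewrite !mxE.
have pairing f : fvec F f *m B F = fvec G f *m B G.
  by rewrite !pairing_row; apply/rowP => l; rewrite [LHS]mxE [RHS]mxE eq_scalar.
have eqAB : A F *m B F = A G *m B G.
  by apply/row_matrixP => k; rewrite !row_mul !row_family_mx pairing.
have fullAF : row_full (A F) by rewrite -sub1mx.
have freeBF : row_free (B F) by rewrite /row_free mxrank_tr; rewrite sub1mx in spanF'.
have [e [e_transport e_iso]] := pairing_transport le_GF fullAF freeBF eqAB.
by exists e; split=> // f; apply: e_transport (pairing f).
Qed.

Unset Implicit Arguments.

Theorem lemma4p2 (K : fieldType) (C : MonCat) (F G : MonFun C K) :
  rigid C ->
  fun_nondegenerate F ->
  (forall X : C, (G X <= F X)%N) ->
  (forall phi : mhom (@munit C) munit, unit_scalar F phi = unit_scalar G phi) ->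
  exists eta : forall X : C, 'M[K]_(F X, G X),
    monoidal_nat_iso eta /\
    (forall eta' : forall X : C, 'M[K]_(F X, G X),
        monoidal_nat_iso eta' -> forall X : C, eta' X = eta X).
Proof.
move=> C_rigid F_nondeg le_GF eq_scalar.
have [eta eta_spec] :=
  dependent_functional_choice (fun X => exists_fvec_iso C_rigid F_nondeg (le_GF X) eq_scalar).
have eta_fvec X (f : mhom munit X) : fvec F f *m eta X = fvec G f by case: (eta_spec X).
exists eta; split; first (split; [|split; [|split]]).
- move=> X Y h; apply: (fvec_ext F_nondeg) => f.
  by rewrite mulmxA -fvec_cmp eta_fvec fvec_cmp -eta_fvec mulmxA.
- by move=> X; case: (eta_spec X).
- move=> X Y; apply: (tens_fvec_ext F_nondeg) => f f'.
  by rewrite [LHS]mulmxA fvec_tens eta_fvec mulmxA tensmx_mul !eta_fvec fvec_tens.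
- by have := eta_fvec munit (idm munit); rewrite /fvec !fhom_id !mulmx1.
- move=> eta' [eta'_nat [_ [_ eta'_unit]]] X; apply: (fvec_ext F_nondeg) => f.
  by rewrite eta_fvec /fvec -mulmxA eta'_nat mulmxA eta'_unit.
Qed.
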